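(* Let $X$ be a continuum and $Y\subset X$ a totally disconnected subset. If $y\in\Lambda(Y)$, then $F(y)$ is a non-degenerate subcontinuum of $X$ and $F(y)\cap Y=\{y\}$.
   Context: A continuum is a compact connected metric space. For $Y\subset X$ and $y\in Y$, let $\mathcal U_y$ be the collection of all open subsets $U$ of $X$ with $y\in U$ and $\partial U\subset X\setminus Y$ (boundary taken in $X$), and put $F(y)=\bigcap_{U\in\mathcal U_y}\overline U$. $Y$ is totally disconnected if every two distinct points of $Y$ lie in disjoint clopen subsets of $Y$. $Y$ is zero-dimensional at $y$ if $y$ has a neighborhood basis in $Y$ of clopen subsets of $Y$; $\Lambda(Y)$ is the set of points at which $Y$ is not zero-dimensional. *)

From HB Require Import structures.
From mathcomp Require Import all_boot all_order all_algebra.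
From mathcomp Require Import all_classical all_reals all_analysis.
Set Implicit Arguments. Unset Strict Implicit. Unset Printing Implicit Defensive.
Import Order.TTheory GRing.Theory Num.Theory.
Local Open Scope classical_set_scope.

Section Defs.
Context {T : topologicalType}.

Definition bdry (U : set T) : set T := closure U `\` interior U.

Definition Ucal (Y : set T) (y : T) : set (set T) :=
  [set U | open U /\ U y /\ bdry U `<=` ~` Y].

Definition Fset (Y : set T) (y : T) : set T :=
  \bigcap_(U in Ucal Y y) closure U.

Definition rel_open (Y A : set T) : Prop := exists2 O, open O & A = O `&` Y.
Definition rel_closed (Y A : set T) : Prop := exists2 C, closed C & A = C `&` Y.
Definition rel_clopen (Y A : set T) : Prop :=
  A `<=` Y /\ rel_open Y A /\ rel_closed Y A.

Definition totally_disconnected_set (Y : set T) : Prop :=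
  forall a b, Y a -> Y b -> a <> b ->
    exists A B, [/\ rel_clopen Y A, rel_clopen Y B, A a, B b & A `&` B = set0].

Definition zero_dim_at (Y : set T) (y : T) : Prop :=
  forall N, open N -> N y -> exists A, [/\ rel_clopen Y A, A y & A `<=` N `&` Y].

Definition Lambda (Y : set T) : set T := [set y | Y y /\ ~ zero_dim_at Y y].

End Defs.

From HB Require Import structures.
From mathcomp Require Import all_boot all_order all_algebra.
From mathcomp Require Import all_classical all_reals all_analysis.
Set Implicit Arguments. Unset Strict Implicit. Unset Printing Implicit Defensive.
Local Open Scope classical_set_scope.

Import Order.TTheory GRing.Theory Num.Theory.

(** Compactness gives, for every open [W] containing [F(y)], some [U] in [U_y]
   with [closure U `<=` W].  Hence [F(y)] cannot be split by two disjoint open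
   sets [G, H] with [y] in [G]: cutting such a [U] down to [U `&` G] stays in
   [U_y], so [F(y) `<=` G]; since separated sets of a metric space have disjoint
   open neighbourhoods, [F(y)] is connected.  If [F(y) = [set y]], the traces
   [U `&` Y] would form a clopen neighbourhood basis of [y] in [Y], contradicting
   [y \in Lambda Y].  Finally, for [x] in [Y] other than [y], a [Y]-clopen set
   containing [y] but not [x] has an open neighbourhood in [U_y] whose closure
   misses [x]. *)

Section separated_open_nbhs.
Local Open Scope ring_scope.
Context {R : realType} {X : pseudoMetricType R}.

(* Doubling the radius makes [sep_nbhs P Q] and [sep_nbhs Q P] disjoint by the
   triangle inequality: this is complete normality of pseudometric spaces. *)
Definition sep_nbhs (P Q : set X) : set X :=
  \bigcup_(a in P)
    \bigcup_(e in [set e : R | 0 < e /\ ball a (e + e) `&` Q = set0]) (ball a e)°.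

Lemma open_sep_nbhs (P Q : set X) : open (sep_nbhs P Q).
Proof. by do 2 apply: bigcup_open => ? _; exact: open_interior. Qed.

Lemma sub_sep_nbhs (P Q : set X) : P `&` closure Q = set0 -> P `<=` sep_nbhs P Q.
Proof.
move=> PQ a Pa; have [B aB QB] : exists2 B, nbhs a B & Q `&` B = set0.
  apply: contrapT => noB.
  suff : (P `&` closure Q) a by rewrite PQ.
  split=> // B aB; apply/set0P/eqP => QB; apply: noB; by exists B.
have [e e0 aeB] := (nbhs_ballP a B).1 aB.
exists a => //; exists (e / 2).
  split; first by rewrite divr_gt0.
  rewrite -splitr; apply/disjoints_subset => z /aeB Bz Qz.
  by have : (Q `&` B) z by []; rewrite QB.
by apply: nbhsx_ballx; rewrite divr_gt0.
Qed.

Lemma sep_nbhs_disjoint (P Q : set X) : sep_nbhs P Q `&` sep_nbhs Q P = set0.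
Proof.
apply/seteqP; split => // x [[a Pa [e1 [_ aQ] /interior_subset ax]]].
move=> [b Qb [e2 [_ bP] /interior_subset bx]].
have [le21|le12] := leP e2 e1.
- suff : (ball a (e1 + e1) `&` Q) b by rewrite aQ.
  split=> //; apply: (le_ball (e1 := e1 + e2)); first by rewrite lerD2l.
  exact: ball_triangle ax (ball_sym bx).
- suff : (ball b (e2 + e2) `&` P) a by rewrite bP.
  split=> //; apply: (le_ball (e1 := e2 + e1)); first by rewrite lerD2l ltW.
  exact: ball_triangle bx (ball_sym ax).
Qed.

Lemma separated_open_nbhs (P Q : set X) : separated P Q ->
  exists U V, [/\ open U, open V, P `<=` U, Q `<=` V & U `&` V = set0].
Proof.
move=> [QP PQ]; exists (sep_nbhs P Q), (sep_nbhs Q P); split.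
- exact: open_sep_nbhs.
- exact: open_sep_nbhs.
- exact: sub_sep_nbhs.
- by apply: sub_sep_nbhs; rewrite setIC.
- exact: sep_nbhs_disjoint.
Qed.

End separated_open_nbhs.

Section clopen_separation.
Context {T : topologicalType}.

Lemma open_disjoint_closure (G H : set T) :
  open H -> G `&` H = set0 -> closure G `&` H = set0.
Proof.
move=> oH /disjoints_subset GH; apply/disjoints_subset.
apply: subset_trans (closureS GH) _.
by rewrite -(closure_id _).1 //; exact: open_closedC.
Qed.

Lemma rel_clopen_separated (Y A : set T) : rel_clopen Y A -> separated A (Y `\` A).
Proof.
move=> [AY [[U oU AU] [C cC AC]]]; split.
- apply/disjoints_subset => z Az [Yz nAz]; apply: nAz; rewrite AC; split => //.
  by rewrite (closure_id C).1 //; apply: closureS Az; rewrite AC => ? [].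
- apply/disjoints_subset => z Az.
  have /disjoints_subset cYA : closure (Y `\` A) `&` U = set0.
    apply: open_disjoint_closure => //; apply/disjoints_subset => w [Yw nAw] Uw.
    by apply: nAw; rewrite AU.
  by move=> /cYA; apply; move: Az; rewrite AU => -[].
Qed.

End clopen_separation.

Section Fset_topological.
Context {T : topologicalType} (Y : set T) (y : T).

Lemma bdry_open (U : set T) : open U -> bdry U = closure U `\` U.
Proof. by move=> oU; rewrite /bdry (interior_id U).1. Qed.

Lemma UcalT : Ucal Y y setT.
Proof.
split; first exact: openT.
by split=> // x; rewrite bdry_open ?setDT //; exact: openT.
Qed.

Lemma UcalI (U V : set T) : Ucal Y y U -> Ucal Y y V -> Ucal Y y (U `&` V).
Proof.
move=> [oU [Uy bU]] [oV [Vy bV]]; have oUV := openI oU oV.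
split=> //; split=> // x; rewrite bdry_open // => -[/closureI[clU clV] nUVx].
have [Ux|nUx] := pselect (U x).
- by apply: bV; rewrite bdry_open //; split => // Vx; exact: nUVx.
- by apply: bU; rewrite bdry_open.
Qed.

Lemma Fset_self : Fset Y y y.
Proof. by move=> U [_ [Uy _]]; exact: subset_closure. Qed.

Lemma closed_Fset : closed (Fset Y y).
Proof. by apply: closed_bigI => U _; exact: closed_closure. Qed.

Lemma Ucal_separation (G H : set T) : open G -> open H -> G `&` H = set0 ->
  Y `<=` G `|` H -> G y -> Ucal Y y G.
Proof.
move=> oG oH GH YGH Gy; split=> //; split=> // x.
rewrite bdry_open // => -[clGx nGx] /YGH [//|Hx].
by have : (closure G `&` H) x by []; rewrite open_disjoint_closure.
Qed.

Lemma Ucal_rel_clopen (U : set T) : Ucal Y y U -> rel_clopen Y (U `&` Y).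
Proof.
move=> [oU [_ bU]]; split; first exact: subIsetr.
split; first by exists U.
exists (closure U); first exact: closed_closure.
apply/seteqP; split=> x [Ux Yx]; split=> //; first exact: subset_closure.
apply: contrapT => nUx; apply: (bU x _ Yx); by rewrite bdry_open.
Qed.

Hypothesis cptT : compact [set: T].

Lemma Ucal_closure_subset (W : set T) : open W -> Fset Y y `<=` W ->
  exists2 U, Ucal Y y U & closure U `<=` W.
Proof.
move=> oW FW; apply: contrapT => noU.
have meetC U : Ucal Y y U -> closure U `\` W !=set0.
  move=> UU; apply/set0P/eqP => UW; apply: noU; by exists U => //; rewrite -setD_eq0.
pose F := filter_from (Ucal Y y) (fun U => closure U `\` W).
have FF : ProperFilter F.
  apply: filter_from_proper meetC; apply: filter_from_filter.
    by exists setT; exact: UcalT.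
  move=> U V UU UV; exists (U `&` V); first exact: UcalI.
  by move=> x [/closureI[clU clV] nWx].
have [|p [_ clp]] := cptT FF; first by exists setT; [exact: UcalT|].
have clU U : Ucal Y y U -> (closure U `\` W) p.
  move=> UU; have clUW : closed (closure U `\` W).
    by apply: closedI; [exact: closed_closure | exact: open_closedC].
  by apply: clUW; rewrite clusterE in clp; apply: clp; exists U.
by have [_] := clU _ UcalT; apply; apply: FW => U /clU[].
Qed.

Lemma Fset_sub_separation (G H : set T) : open G -> open H -> G `&` H = set0 ->
  Fset Y y `<=` G `|` H -> G y -> Fset Y y `<=` G.
Proof.
move=> oG oH GH FGH Gy.
have [U [oU [Uy bU]] clU] := Ucal_closure_subset (openU oG oH) FGH.
have clUG : closure (U `&` G) `<=` G.
  move=> x clx; have [//|Hx] : (G `|` H) x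
    by apply: clU; exact: (closureS (@subIsetl _ U G)).
  have UGH : U `&` G `&` H = set0 by rewrite -setIA GH setI0.
  by have : (closure (U `&` G) `&` H) x by []; rewrite open_disjoint_closure.
have UG : Ucal Y y (U `&` G).
  have oUG := openI oU oG; split=> //; split=> // x.
  rewrite bdry_open // => -[clx nUGx] Yx; apply: (bU x _ Yx).
  rewrite bdry_open //; split; first exact: (closureS (@subIsetl _ U G)).
  by move=> Ux; apply/nUGx; split=> //; exact: clUG.
by move=> x /(_ _ UG); exact: clUG.
Qed.

Lemma zero_dim_at_Fset1 : Y y -> Fset Y y `<=` [set y] -> zero_dim_at Y y.
Proof.
move=> Yy Fy N oN Ny.
have [U UU clU] : exists2 U, Ucal Y y U & closure U `<=` N.
  by apply: Ucal_closure_subset => // x /Fy ->.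
exists (U `&` Y); split; [exact: Ucal_rel_clopen | by case: UU => _ [] |].
by move=> x [Ux Yx]; split=> //; apply/clU/subset_closure.
Qed.

End Fset_topological.

Section pseudometric_Fset.
Context {R : realType} {X : pseudoMetricType R} (Y : set X) (y : X).

Lemma connected_Fset : compact [set: X] -> connected (Fset Y y).
Proof.
move=> cptX; apply: contrapT => /connectedPn [E [E0 FE sepE]].
wlog Ey : E E0 FE sepE / E false y.
  move=> wl; have : (E false `|` E true) y by rewrite -FE; exact: Fset_self.
  case=> [|Ety]; first exact: wl.
  apply: (wl (fun b => E (~~ b))) => //; first by rewrite setUC.
  by rewrite separatedC.
have [U [V [oU oV EU EV UV]]] := separated_open_nbhs sepE.
have FU : Fset Y y `<=` U.
  apply: Fset_sub_separation oU oV UV _ (EU _ Ey) => //.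
  by rewrite FE; exact: setUSS.
have [z Ez] := E0 true.
have : (U `&` V) z by split; [apply/FU; rewrite FE; right | exact: EV].
by rewrite UV.
Qed.

Lemma Fset_setI_totally_disconnected : totally_disconnected_set Y -> Y y ->
  Fset Y y `&` Y = [set y].
Proof.
move=> Ytd Yy; apply/seteqP; split=> [x [Fx Yx]|_ ->]; last by split; [exact: Fset_self|].
apply: contrapT => nxy.
have [A [B [cA _ Ay Bx AB]]] := Ytd y x Yy Yx (nesym nxy).
have nAx : ~ A x by move=> Ax; have : (A `&` B) x by []; rewrite AB.
have [U [V [oU oV AU YAV UV]]] := separated_open_nbhs (rel_clopen_separated cA).
have UU : Ucal Y y U.
  apply: Ucal_separation oU oV UV _ (AU _ Ay) => z Yz.
  by have [Az|nAz] := pselect (A z); [left; exact: AU | right; exact: YAV].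
have : (closure U `&` V) x by split; [exact: Fx | exact: YAV].
by rewrite open_disjoint_closure.
Qed.

End pseudometric_Fset.

Theorem lemma1 (R : realType) (X : pseudoMetricType R)
  (Xhaus : hausdorff_space X) (Xcpt : compact [set: X])
  (Xconn : connected [set: X])
  (Y : set X) (Ytd : totally_disconnected_set Y) (y : X) (hy : Lambda Y y) :
  [/\ compact (Fset Y y), connected (Fset Y y),
      (exists a b, [/\ Fset Y y a, Fset Y y b & a <> b]) &
      Fset Y y `&` Y = [set y]].
Proof.
have [Yy not_zero_dim] := hy.
split.
- by apply: subclosed_compact Xcpt _; [exact: closed_Fset |].
- exact: connected_Fset.
- apply: contrapT => degenerate; apply/not_zero_dim/zero_dim_at_Fset1 => // x Fx.
  by apply: contrapT => nxy; apply: degenerate; exists x, y; split=> //; exact: Fset_self.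
- exact: Fset_setI_totally_disconnected.
Qed.
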